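(* Consider the following network model. Let $q$ be a prime power, $K\ge1$, $L\ge1$, $N_{\mathrm S}\ge K$, $N_{\mathrm R}\ge1$. A source S draws $N_{\mathrm S}$ coefficient vectors i.i.d. uniformly from $\mathbb{F}_q^K$ and broadcasts one packet per vector. Each transmitted packet is erased on the link S$\to$D with probability $\epsilon_{\mathrm{SD}}$ and on the link S$\to\mathrm R_j$ with probability $\epsilon_{\mathrm{SR}_j}$ ($j=1,\dots,L$), all erasures independent across links and packets and independent of the coefficients. Relay $\mathrm R_j$, having received $m_j$ packets with coefficient matrix $\mathbf{C}_{\mathrm S\to\mathrm R_j}\in\mathbb{F}_q^{m_j\times K}$, draws $\mathbf{G}_j\in\mathbb{F}_q^{N_{\mathrm R}\times m_j}$ with i.i.d. uniform entries and transmits the $N_{\mathrm R}$ rows of $\mathbf{G}_j\mathbf{C}_{\mathrm S\to\mathrm R_j}$ to D, each independently erased with probability $\epsilon_{\mathrm R_j\mathrm D}$. D stacks all coefficient vectors it received into $\mathbf{C}_{\mathrm D}$; decoding succeeds iff $\operatorname{rank}(\mathbf{C}_{\mathrm D})=K$, and $P^{(L)}_{\mathrm R}$ is its probability. Then $$P^{(L)}_{\mathrm R}\le P(N_{\mathrm S},\tilde\epsilon),\qquad \tilde\epsilon=\epsilon_{\mathrm{SD}}\prod_{j=1}^L\epsilon_{\mathrm{SR}_j},$$ where $P(N,\epsilon)=\sum_{k=K}^{N}\binom{N}{k}(1-\epsilon)^k\epsilon^{N-k}\prod_{i=0}^{K-1}\left(1-q^{i-k}\right)$.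
   Context: $P(N,\epsilon)$ is the probability that, of $N$ packets carrying i.i.d. uniform coefficient vectors in $\mathbb{F}_q^K$, each independently erased with probability $\epsilon$, the received ones have rank $K$. *)

From mathcomp Require Import all_boot all_order all_algebra all_field.
Set Implicit Arguments. Unset Strict Implicit. Unset Printing Implicit Defensive.
Import Order.TTheory GRing.Theory Num.Theory.
Local Open Scope ring_scope.

Definition bern_w (R : numDomainType) (n : nat) (e : R) (m : {ffun 'I_n -> bool}) : R :=
  \prod_(i < n) (if m i then 1 - e else e).

(* Row space (as a square K x K matrix, MathComp's %MS convention) spanned by
   all coefficient vectors received at D:
   - C : the N_S source coefficient vectors (rows), i.i.d. uniform in F^K;
   - sSD i : packet i received on S -> D;
   - sSR j i : packet i received on S -> R_j;
   - G j : N_R x N_S uniform matrix; only the columns of the packets received by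
     R_j are used, i.e. relay j sends the rows of G_j C_{S->R_j} where G_j is
     the restriction of G j to the received columns (marginally i.i.d. uniform);
   - sRD j r : packet r of relay j received at D. *)
Definition recv_space (F : fieldType) (K NS NR L : nat)
  (C : 'M[F]_(NS, K)) (sSD : {ffun 'I_NS -> bool})
  (sSR : {ffun 'I_L -> {ffun 'I_NS -> bool}})
  (G : {ffun 'I_L -> 'M[F]_(NR, NS)})
  (sRD : {ffun 'I_L -> {ffun 'I_NR -> bool}}) : 'M[F]_K :=
  (\sum_(i < NS | sSD i) <<row i C>>
   + \sum_(j < L) \sum_(r < NR | sRD j r)
        <<row r (G j *m (diag_mx (\row_i (if sSR j i then 1 else 0)) *m C))>>)%MS.

Definition PR (R : numFieldType) (F : finFieldType) (K NS NR L : nat)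
  (eSD : R) (eSR eRD : 'I_L -> R) : R :=
  \sum_(C : 'M[F]_(NS, K)) \sum_(sSD : {ffun 'I_NS -> bool})
  \sum_(sSR : {ffun 'I_L -> {ffun 'I_NS -> bool}})
  \sum_(G : {ffun 'I_L -> 'M[F]_(NR, NS)})
  \sum_(sRD : {ffun 'I_L -> {ffun 'I_NR -> bool}})
    ((#|{: 'M[F]_(NS, K)}|%:R)^-1 * bern_w eSD sSD
     * (\prod_(j < L) bern_w (eSR j) (sSR j))
     * (#|{: {ffun 'I_L -> 'M[F]_(NR, NS)}}|%:R)^-1
     * (\prod_(j < L) bern_w (eRD j) (sRD j))
     * (\rank (recv_space C sSD sSR G sRD) == K)%:R).

Definition Pfull (R : numFieldType) (q K N : nat) (eps : R) : R :=
  \sum_(K <= k < N.+1) ('C(N, k)%:R * (1 - eps) ^+ k * eps ^+ (N - k)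
     * \prod_(i < K) (1 - (q%:R ^- (k - i)%N))).

(* Every coefficient vector reaching D, directly or through a relay, is a
   combination of the source vectors received by at least one of D, R_1, ...,
   R_L.  Hence decoding at D forces these source vectors to span F^K.  A source
   packet misses all of D, R_1, ..., R_L independently with probability
   eps = eSD * prod_j eSR_j, and k uniform vectors of F^K span it with
   probability prod_(i<K) (1 - q^(i-k)); averaging over the binomial number k
   of surviving packets gives P(N_S, eps). *)

From mathcomp Require Import all_boot all_order all_algebra all_field.
From mathcomp Require Import mxabelem ring zify.
Import Order.TTheory GRing.Theory Num.Theory.
Local Open Scope ring_scope.
Set Implicit Arguments. Unset Strict Implicit. Unset Printing Implicit Defensive.

Section FullRankCount.
Variable F : finFieldType.

Lemma card_mulmx_sub n p (P : 'M[F]_(n, p)) m (W : 'M[F]_(m, p)) : (W <= P)%MS ->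
  #|[pred v : 'rV[F]_n | (v *m P <= W)%MS]| = (#|F| ^ (n - \rank P + \rank W))%N.
Proof.
move=> sWP; rewrite expnD -card_rowg mulnC -sum_nat_const -[LHS]sum1_card.
rewrite (partition_big (mulmxr P) (mem (rowg W))) => [|v]; last by rewrite !inE.
apply: eq_bigr => w /=; rewrite inE => swW.
have /submxP[x Dw] := submx_trans swW sWP.
rewrite (reindex (+%R^~ x)) /=; last first.
  by exists (fun v => v - x) => u _; rewrite ?addrK ?subrK.
rewrite -mxrank_ker -card_rowg -sum1_card; apply: eq_bigl => u.
rewrite !inE mulmxDl -Dw -{3}[w]add0r (can_eq (addrK w)).
by rewrite sub_kermx; case: eqP => [->|_]; rewrite ?add0r ?swW ?andbF.
Qed.

Lemma row_free_col_mx n m (a : 'rV[F]_n) (B : 'M[F]_(m, n)) :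
  row_free (col_mx a B) = row_free B && ~~ (a <= B)%MS.
Proof.
rewrite /row_free -addsmxE addsmxC.
have [sab|nsab] := boolP (a <= B)%MS.
  by rewrite andbF (addsmx_idPl sab) ltn_eqF // ltnS rank_leq_row.
have ltB : (\rank B < \rank (B + a))%N.
  rewrite rank_ltmx // ltmxE addsmxSl /=.
  by apply: contra nsab; apply: submx_trans (addsmxSr _ _).
have leB : (\rank (B + a) <= (\rank B).+1)%N.
  apply: leq_trans (mxrank_adds_leqif _ _) _.
  by rewrite -[X in (_ <= X)%N]addn1 leq_add2l rank_leq_row.
have -> : \rank (B + a)%MS = (\rank B).+1 by apply/eqP; rewrite eqn_leq leB.
by rewrite eqSS andbT.
Qed.

Lemma card_row_free_mulmx n p (P : 'M[F]_(n, p)) m :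
  #|[pred A : 'M[F]_(m, n) | row_free (A *m P)]|
  = (\prod_(j < m) (#|F| ^ n - #|F| ^ (n - \rank P + j)))%N.
Proof.
elim: m => [|m IHm].
  rewrite big_ord0 -[RHS](card_mx F 0 n); apply: eq_card => A.
  by rewrite inE /row_free flatmx0 mxrank0.
rewrite big_ord_recr /= -IHm -sum_nat_const -[LHS]sum1_card.
rewrite (partition_big (@dsubmx F 1 m n) [pred B | row_free (B *m P)]) /=; last first.
  move=> A; rewrite !inE.
  have -> : A *m P = col_mx (usubmx A *m P) (dsubmx A *m P).
    by rewrite -mul_col_mx vsubmxK.
  by rewrite row_free_col_mx => /andP[].
apply: eq_bigr => B freeB.
rewrite (reindex (col_mx^~ B)) /=; last first.
  exists usubmx => [v _ | A]; first by rewrite col_mxKu.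
  by rewrite inE => /andP[_ /eqP <-]; rewrite vsubmxK.
rewrite sum1_card.
rewrite (eq_card (B := [predC [pred v : 'rV[F]_n | (v *m P <= B *m P)%MS]])); last first.
  move=> v; rewrite [v \in _]unfold_in /= !inE; set M := (X in row_free X).
  have -> : M = col_mx (v *m P) (B *m P) := @mul_col_mx _ 1 m n p v B P.
  by rewrite row_free_col_mx col_mxKd eqxx andbT freeB.
rewrite -(addKn #|[pred v : 'rV[F]_n | (v *m P <= B *m P)%MS]| #|[predC _]|) cardC.
by rewrite card_mulmx_sub ?submxMl // (eqP freeB) card_mx mul1n.
Qed.

End FullRankCount.

Lemma prob_full_col_rank_mulmx (R : numFieldType) (F : finFieldType) p n K
    (P : 'M[F]_(p, n)) :
  (#|{: 'M[F]_(n, K)}|%:R)^-1 * \sum_(C : 'M[F]_(n, K)) ((\rank (P *m C) == K)%:R : R)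
  = \prod_(j < K) (1 - #|F|%:R ^- (\rank P - j)).
Proof.
have q_gt0 : (0 < #|F|)%N by apply/card_gt0P; exists 0.
have q_neq0 : (#|F|%:R : R) != 0 by rewrite pnatr_eq0 -lt0n.
have -> : \sum_(C : 'M[F]_(n, K)) ((\rank (P *m C) == K)%:R : R)
    = #|[pred A : 'M[F]_(K, n) | row_free (A *m P^T)]|%:R.
  rewrite -sum1_card natr_sum [RHS]big_mkcond /= (reindex (@trmx _ K n)) /=; last first.
    by exists (@trmx _ n K) => A _; rewrite trmxK.
  apply: eq_bigr => A _; rewrite inE /row_free -mxrank_tr trmx_mul !trmxK.
  by case: eqP.
rewrite card_row_free_mulmx mxrank_tr card_mx natr_prod.
have -> : ((#|F| ^ (n * K))%:R : R) = \prod_(j < K) (#|F| ^ n)%:R.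
  by rewrite prodr_const card_ord -natrX -expnM mulnC.
have := rank_leq_col P; move: (\rank P) => k le_kn.
rewrite -prodfV -big_split /=; apply: eq_bigr => j _.
have [lt_jk|le_kj] := ltnP j k.
  rewrite natrB ?leq_pexp2l //; last by lia.
  have -> : (#|F| ^ n = #|F| ^ (n - k + j) * #|F| ^ (k - j))%N.
    by rewrite -expnD; congr expn; lia.
  rewrite natrM !natrX; field.
  by rewrite !expf_neq0.
have -> : (k - j = 0)%N by lia.
rewrite expr0 invr1 subrr.
have -> : (#|F| ^ n - #|F| ^ (n - k + j) = 0)%N.
  by apply/eqP; rewrite subn_eq0 leq_pexp2l //; lia.
by rewrite mulr0.
Qed.

Definition mask_mx {F : fieldType} {n} (t : {ffun 'I_n -> bool}) : 'M[F]_n :=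
  diag_mx (\row_i (if t i then 1 else 0)).

Section MaskMatrix.
Variable F : fieldType.

Lemma row_mask_mx n m (t : {ffun 'I_n -> bool}) (C : 'M[F]_(n, m)) i :
  row i (mask_mx t *m C) = if t i then row i C else 0.
Proof.
rewrite mul_diag_mx; apply/rowP => j; rewrite !mxE.
by case: (t i); rewrite ?mxE ?mul1r ?mul0r.
Qed.

Lemma mask_mx_subset n m (t t' : {ffun 'I_n -> bool}) (C : 'M[F]_(n, m)) :
  (forall i, t i -> t' i) -> (mask_mx t *m C <= mask_mx t' *m C)%MS.
Proof.
move=> sub_tt'; apply/row_subP => i; rewrite row_mask_mx.
case: ifP => [/sub_tt' t'i|_]; last by rewrite sub0mx.
by apply: (eq_row_sub i); rewrite row_mask_mx t'i.
Qed.

Lemma rank_mask_mx n (t : {ffun 'I_n -> bool}) :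
  \rank (mask_mx t : 'M[F]_n) = #|[set i | t i]|.
Proof.
have -> : (mask_mx t :=: \sum_(i | t i) <<delta_mx 0 i : 'rV[F]_n>>)%MS.
  apply/eqmxP/andP; split.
    apply/row_subP => i; rewrite row_diag_mx mxE.
    case: ifP => ti; last by rewrite scale0r sub0mx.
    by rewrite scale1r (sumsmx_sup i) ?genmxE.
  apply/sumsmx_subP => i ti; rewrite genmxE.
  by apply: (eq_row_sub i); rewrite row_diag_mx mxE ti scale1r.
have /mxdirectP -> /= := @mxdirect_delta F _ (fun i => t i) n id (in2W (@inj_id _)).
rewrite -sum1_card; apply: eq_big => [i|i _]; first by rewrite inE.
by rewrite mxrank_gen mxrank_delta.
Qed.

End MaskMatrix.

Section Bernoulli.
Variable R : numDomainType.

Lemma bern_w_ge0 n (e : R) (m : {ffun 'I_n -> bool}) :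
  0 <= e <= 1 -> 0 <= bern_w e m.
Proof.
by case/andP=> e0 e1; apply: prodr_ge0 => i _; case: (m i); rewrite ?subr_ge0.
Qed.

Lemma sum_bern_w n (e : 'I_n -> R) :
  \sum_(m : {ffun 'I_n -> bool}) \prod_i (if m i then 1 - e i else e i) = 1.
Proof.
rewrite -(bigA_distr_bigA (fun i (b : bool) => if b then 1 - e i else e i)) /=.
by apply: big1 => i _; rewrite big_bool /= subrK.
Qed.

Lemma sum_prod_bern_w L n (e : 'I_L -> R) :
  \sum_(s : {ffun 'I_L -> {ffun 'I_n -> bool}}) \prod_j bern_w (e j) (s j) = 1.
Proof.
rewrite -(bigA_distr_bigA (fun j (m : {ffun 'I_n -> bool}) => bern_w (e j) m)) /=.
by apply: big1 => j _; apply: (sum_bern_w (fun=> e j)).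
Qed.

Lemma sum_bern_exists L (e : 'I_L -> R) (b : bool) :
  \sum_(y : {ffun 'I_L -> bool} | [exists j, y j] == b)
     \prod_j (if y j then 1 - e j else e j)
  = if b then 1 - \prod_j e j else \prod_j e j.
Proof.
have none : \sum_(y : {ffun 'I_L -> bool} | ~~ [exists j, y j])
    \prod_j (if y j then 1 - e j else e j) = \prod_j e j.
  rewrite (big_pred1 [ffun=> false]) => [|y].
    by apply: eq_bigr => j _; rewrite ffunE.
  rewrite /= negb_exists; apply/forallP/eqP => [y0|-> j]; last by rewrite ffunE.
  by apply/ffunP => j; rewrite ffunE; apply/negbTE.
case: b; last by rewrite -none; apply: eq_bigl => y; rewrite eqbF_neg.
have := sum_bern_w e; rewrite (bigID (fun y : {ffun _} => [exists j, y j])) /= none.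
by move/(canRL (addrK _)) => <-; apply: eq_bigl => y; rewrite eqb_id.
Qed.

Lemma bern_orb_exists L (e0 : R) (e : 'I_L -> R) (b : bool) :
  \sum_(b0 : bool) (if b0 then 1 - e0 else e0) *
     \sum_(y : {ffun 'I_L -> bool} | (b0 || [exists j, y j]) == b)
        \prod_j (if y j then 1 - e j else e j)
  = if b then 1 - e0 * \prod_j e j else e0 * \prod_j e j.
Proof.
rewrite big_bool /= sum_bern_exists.
case: b; last by rewrite big_pred0 // mulr0 add0r.
by rewrite (eq_bigl xpredT) // sum_bern_w; ring.
Qed.

End Bernoulli.

Lemma sum_prod_ffun_map (R : comPzSemiRingType) (X Y : finType) n
    (p : 'I_n -> X -> R) (f : 'I_n -> X -> Y) (g : {ffun 'I_n -> Y} -> R) :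
  \sum_(x : {ffun 'I_n -> X}) (\prod_i p i (x i)) * g [ffun i => f i (x i)]
  = \sum_(t : {ffun 'I_n -> Y}) (\prod_i \sum_(y | f i y == t i) p i y) * g t.
Proof.
rewrite (partition_big (fun x : {ffun 'I_n -> X} => [ffun i => f i (x i)]) xpredT) //=.
apply: eq_bigr => t _; rewrite bigA_distr_big_dep big_distrl /=.
apply: eq_big => [x|x /eqP <-] //.
apply/eqP/familyP => [<- i|ft]; first by rewrite unfold_in ffunE.
by apply/ffunP => i; rewrite ffunE; have := ft i; rewrite unfold_in => /eqP.
Qed.

Definition received_any NS L (sSD : {ffun 'I_NS -> bool})
  (sSR : {ffun 'I_L -> {ffun 'I_NS -> bool}}) : {ffun 'I_NS -> bool} :=
  [ffun i => sSD i || [exists j, sSR j i]].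

Lemma sum_bern_received_any (R : numDomainType) NS L (eSD : R) (eSR : 'I_L -> R)
    (g : {ffun 'I_NS -> bool} -> R) :
  \sum_(sSD : {ffun 'I_NS -> bool}) \sum_(sSR : {ffun 'I_L -> {ffun 'I_NS -> bool}})
    bern_w eSD sSD * ((\prod_j bern_w (eSR j) (sSR j)) * g (received_any sSD sSR))
  = \sum_(t : {ffun 'I_NS -> bool}) bern_w (eSD * \prod_j eSR j) t * g t.
Proof.
pose per_packet (x : {ffun 'I_NS -> bool * {ffun 'I_L -> bool}}) :=
  ([ffun i => (x i).1], [ffun j => [ffun i => (x i).2 j]]).
rewrite pair_bigA /= (reindex per_packet) /=; last first.
  exists (fun s : {ffun 'I_NS -> bool} * {ffun 'I_L -> {ffun 'I_NS -> bool}} =>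
    [ffun i => (s.1 i, [ffun j => s.2 j i])]) => [x _|[s S] _].
    apply/ffunP => i; rewrite ffunE.
    apply: injective_projections => /=; first by rewrite ffunE.
    by apply/ffunP => j; rewrite !ffunE.
  congr pair; apply/ffunP => i; rewrite !ffunE //=.
  by apply/ffunP => j; rewrite !ffunE.
pose p (c : bool * {ffun 'I_L -> bool}) :=
  (if c.1 then 1 - eSD else eSD) * \prod_j (if c.2 j then 1 - eSR j else eSR j).
transitivity (\sum_(x : {ffun 'I_NS -> bool * {ffun 'I_L -> bool}})
   (\prod_i p (x i)) * g [ffun i => (x i).1 || [exists j, (x i).2 j]]).
  apply: eq_bigr => x _; rewrite mulrA; congr (_ * g _); last first.
    apply/ffunP => i; rewrite !ffunE; congr orb.
    by apply: eq_existsb => j; rewrite !ffunE.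
  rewrite /bern_w /p big_split /= exchange_big /=; congr (_ * _).
    by apply: eq_bigr => i _; rewrite ffunE.
  by apply: eq_bigr => j _; apply: eq_bigr => i _; rewrite !ffunE.
rewrite (sum_prod_ffun_map (fun=> p) (fun _ c => c.1 || [exists j, c.2 j])).
apply: eq_bigr => t _; congr (_ * _); apply: eq_bigr => i _.
rewrite -bern_orb_exists; under [RHS]eq_bigr do rewrite big_distrr.
by rewrite pair_big_dep /=; apply: eq_big => [[b y]|[b y] _].
Qed.

Lemma bern_w_set (R : numDomainType) N (e : R) (S : {set 'I_N}) :
  bern_w e [ffun i => i \in S] = (1 - e) ^+ #|S| * e ^+ (N - #|S|).
Proof.
rewrite /bern_w (bigID [in S]) /=.
rewrite (eq_bigr (fun=> 1 - e)) => [|i iS]; last by rewrite ffunE iS.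
rewrite (eq_bigr (fun=> e)) => [|i iS]; last by rewrite ffunE (negbTE iS).
rewrite [X in _ * X](eq_bigl [in ~: S]) => [|i]; last by rewrite inE.
by rewrite !prodr_const cardsCs setCK card_ord.
Qed.

Lemma sum_bern_w_card (R : numDomainType) N (e : R) (f : nat -> R) :
  \sum_(t : {ffun 'I_N -> bool}) bern_w e t * f #|[set i | t i]|
  = \sum_(k < N.+1) 'C(N, k)%:R * (1 - e) ^+ k * e ^+ (N - k) * f k.
Proof.
rewrite (reindex (fun S : {set 'I_N} => [ffun i => i \in S])) /=; last first.
  exists (fun t => [set i | t i]) => [S _|t _].
    by apply/setP => i; rewrite inE ffunE.
  by apply/ffunP => i; rewrite ffunE inE.
have cardS (S : {set 'I_N}) : (#|S| < N.+1)%N.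
  by rewrite ltnS -[X in (_ <= X)%N]card_ord max_card.
rewrite (partition_big (fun S : {set 'I_N} => Ordinal (cardS S)) xpredT) //=.
apply: eq_bigr => k _.
transitivity (\sum_(S : {set 'I_N} | #|S| == k) (1 - e) ^+ k * e ^+ (N - k) * f k).
  apply: eq_big => [S|S /eqP <-]; first by rewrite -val_eqE.
  by rewrite bern_w_set; congr (_ * f _); apply: eq_card => i; rewrite !inE ffunE.
rewrite sumr_const (eq_card (B := [set S : {set 'I_N} | #|S| == k])) => [|S].
  by rewrite card_draws card_ord -[LHS]mulr_natl !mulrA.
by rewrite inE.
Qed.

Lemma Pfull_sum_bern_w (R : numFieldType) (q K N : nat) (e : R) :
  Pfull q K N e
  = \sum_(t : {ffun 'I_N -> bool}) bern_w e t
      * \prod_(i < K) (1 - q%:R ^- (#|[set i | t i]| - i)).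
Proof.
rewrite (@sum_bern_w_card _ N e (fun k => \prod_(i < K) (1 - q%:R ^- (k - i)))).
rewrite /Pfull big_geq_mkord [RHS](bigID (fun k : 'I_N.+1 => K <= k)%N) /=.
rewrite [X in _ = _ + X]big1 ?addr0 => [|k]; first by [].
(* For k < K the factor i = k of the product is 1 - q^0 = 0. *)
rewrite -ltnNge => ltkK; rewrite (bigD1 (Ordinal ltkK)) //= subnn expr0 invr1 subrr.
by rewrite mul0r mulr0.
Qed.

Lemma recv_space_sub_received_any (F : fieldType) K NS NR L (C : 'M[F]_(NS, K))
    (sSD : {ffun 'I_NS -> bool}) (sSR : {ffun 'I_L -> {ffun 'I_NS -> bool}})
    (G : {ffun 'I_L -> 'M[F]_(NR, NS)}) (sRD : {ffun 'I_L -> {ffun 'I_NR -> bool}}) :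
  (recv_space C sSD sSR G sRD <= mask_mx (received_any sSD sSR) *m C)%MS.
Proof.
rewrite addsmx_sub; apply/andP; split.
  apply/sumsmx_subP => i sSDi; rewrite genmxE; apply: (eq_row_sub i).
  by rewrite row_mask_mx ffunE sSDi.
apply/sumsmx_subP => j _; apply/sumsmx_subP => r _; rewrite genmxE.
apply: submx_trans (row_sub r _) _; apply: mulmx_sub.
apply: (mask_mx_subset (t := sSR j)) => i sSRji; rewrite ffunE.
by apply/orP; right; apply/existsP; exists j.
Qed.

Section RelayNetwork.
Variables (R : numFieldType) (F : finFieldType) (K L NS NR : nat).
Variables (eSD : R) (eSR eRD : 'I_L -> R).

Definition prob_received_any_full_rank : R :=
  \sum_(C : 'M[F]_(NS, K)) (#|{: 'M[F]_(NS, K)}|%:R)^-1 *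
  \sum_(sSD : {ffun 'I_NS -> bool}) \sum_(sSR : {ffun 'I_L -> {ffun 'I_NS -> bool}})
    bern_w eSD sSD * ((\prod_j bern_w (eSR j) (sSR j))
      * (\rank (mask_mx (received_any sSD sSR) *m C) == K)%:R).

Lemma PR_le_received_any :
  0 <= eSD <= 1 -> (forall j, 0 <= eSR j <= 1) -> (forall j, 0 <= eRD j <= 1) ->
  PR F K NS NR eSD eSR eRD <= prob_received_any_full_rank.
Proof.
move=> eSD01 eSR01 eRD01.
set u := (#|{: 'M[F]_(NS, K)}|%:R : R)^-1.
set v := (#|{: {ffun 'I_L -> 'M[F]_(NR, NS)}}|%:R : R)^-1.
have u_ge0 : 0 <= u by rewrite invr_ge0 ler0n.
have v_ge0 : 0 <= v by rewrite invr_ge0 ler0n.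
apply: ler_sum => C _; rewrite big_distrr; apply: ler_sum => sSD _.
rewrite big_distrr; apply: ler_sum => sSR _.
set x := bern_w eSD sSD * _.
apply: (@le_trans _ _ (\sum_(G : {ffun 'I_L -> 'M[F]_(NR, NS)})
    \sum_(sRD : {ffun 'I_L -> {ffun 'I_NR -> bool}})
      u * x * (v * \prod_j bern_w (eRD j) (sRD j)))).
  apply: ler_sum => G _; apply: ler_sum => sRD _.
  have rank_le : (\rank (recv_space C sSD sSR G sRD) == K)%:R
      <= (\rank (mask_mx (received_any sSD sSR) *m C) == K)%:R :> R.
    case: eqP => [rK|_]; last by rewrite ler0n.
    rewrite eqn_leq rank_leq_col -{1}rK mxrankS //.
    exact: recv_space_sub_received_any.
  set y := (\rank (mask_mx _ *m C) == K)%:R in x rank_le *.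
  have -> : u * x * (v * \prod_j bern_w (eRD j) (sRD j)) = u * bern_w eSD sSD
      * (\prod_j bern_w (eSR j) (sSR j)) * v * (\prod_j bern_w (eRD j) (sRD j)) * y.
    by rewrite /x; ring.
  apply: ler_wpM2l rank_le; rewrite !mulr_ge0 ?bern_w_ge0 //.
    by apply: prodr_ge0 => j _; apply: bern_w_ge0.
  by apply: prodr_ge0 => j _; apply: bern_w_ge0.
(* The relay randomness G, sRD no longer matters and sums out to 1. *)
under eq_bigr do rewrite -big_distrr /=.
rewrite -big_distrr /=.
under eq_bigr do rewrite -big_distrr /= sum_prod_bern_w mulr1.
rewrite sumr_const /v -[X in _ * X]mulr_natr mulVf ?mulr1 // pnatr_eq0 -lt0n.
by apply/card_gt0P; exists [ffun=> 0].
Qed.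

Lemma prob_received_any_full_rankE :
  prob_received_any_full_rank = Pfull #|F| K NS (eSD * \prod_j eSR j).
Proof.
pose full_rank (C : 'M[F]_(NS, K)) t := (\rank (mask_mx t *m C) == K)%:R : R.
rewrite /prob_received_any_full_rank; set u := (_^-1).
rewrite (eq_bigr (fun C =>
    \sum_t u * (bern_w (eSD * \prod_j eSR j) t * full_rank C t))); last first.
  by move=> C _; rewrite (sum_bern_received_any eSD eSR (full_rank C)) big_distrr.
rewrite Pfull_sum_bern_w exchange_big /=; apply: eq_bigr => t _.
rewrite -(rank_mask_mx F) -prob_full_col_rank_mulmx !big_distrr /=.
by apply: eq_bigr => C _; rewrite mulrCA.
Qed.

End RelayNetwork.

Theorem proposition2 (R : realFieldType) (F : finFieldType) (K L NS NR : nat)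
  (eSD : R) (eSR eRD : 'I_L -> R) :
  (1 <= K)%N -> (1 <= L)%N -> (K <= NS)%N -> (1 <= NR)%N ->
  0 <= eSD <= 1 ->
  (forall j, 0 <= eSR j <= 1) ->
  (forall j, 0 <= eRD j <= 1) ->
  PR F K NS NR eSD eSR eRD
    <= Pfull #|F| K NS (eSD * \prod_(j < L) eSR j).
Proof.
move=> _ _ _ _ eSD01 eSR01 eRD01.
rewrite -prob_received_any_full_rankE.
exact: PR_le_received_any.
Qed.
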